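(* Let $R$ be a ring (associative with identity) and let $F$ be a free right $R$-module isomorphic to the direct sum of $\alpha$ copies of $R$, where $\alpha\geq 2$ is a (finite or infinite) cardinal number. Then the endomorphism ring $\mathrm{End}_R(F)$ is 2-clean.
   Context: For a positive integer $n$, an element $a$ of a ring $S$ is called $n$-clean if $a=e+u_1+\cdots+u_n$ for some idempotent $e=e^2\in S$ and units $u_1,\dots,u_n$ of $S$; a ring is $n$-clean if each of its elements is $n$-clean. All rings are associative with identity and modules are unitary. *)

From mathcomp Require Import all_boot all_order all_algebra.
Set Implicit Arguments. Unset Strict Implicit. Unset Printing Implicit Defensive.
Import GRing.Theory.
Local Open Scope ring_scope.

(* The free right R-module R^(I) = direct sum of |I| copies of R, realised as
   finitely supported functions I -> R, with right scalar multiplication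
   (x r)_i = x_i r. *)
Section FreeModule.
Variables (R : pzRingType) (I : Type).

Definition fsupp (x : I -> R) : Prop :=
  exists n (g : 'I_n -> I), forall i, x i <> 0 -> exists k, g k = i.

Lemma fsupp0 : fsupp (fun _ => 0).
Proof. by exists 0%N, (fun k : 'I_0 => False_rect I (notF (ltn_ord k))). Qed.

Lemma fsupp_add x y : fsupp x -> fsupp y -> fsupp (fun i => x i + y i).
Proof.
move=> [n [g Hg]] [m [h Hh]].
exists (n + m)%N, (fun k => match split k with inl a => g a | inr b => h b end).
move=> i Hi.
have [Hx|Hx] := boolP (x i == 0).
- have Hy : y i <> 0 by move: Hi; rewrite (eqP Hx) add0r.
  have [k <-] := Hh i Hy; exists (unsplit (inr k)); by rewrite unsplitK.
- have [k <-] := Hg i (elimN eqP Hx); exists (unsplit (inl k)); by rewrite unsplitK.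
Qed.

Lemma fsupp_scale x (r : R) : fsupp x -> fsupp (fun i => x i * r).
Proof.
move=> [n [g Hg]]; exists n, g => i Hi; apply: Hg => Hx; apply: Hi.
by rewrite Hx mul0r.
Qed.

Definition free_mod := {x : I -> R | fsupp x}.

Definition addF (x y : free_mod) : free_mod :=
  exist _ (fun i => sval x i + sval y i) (fsupp_add (proj2_sig x) (proj2_sig y)).

Definition scaleF (x : free_mod) (r : R) : free_mod :=
  exist _ (fun i => sval x i * r) (fsupp_scale r (proj2_sig x)).

(* The ring End_R(R^(I)) has addition
   (f + g) x = f x + g x, multiplication given by composition, identity id. *)
Definition is_endo (f : free_mod -> free_mod) : Prop :=
  (forall x y, f (addF x y) = addF (f x) (f y)) /\
  (forall x r, f (scaleF x r) = scaleF (f x) r).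

Definition endo_idempotent (e : free_mod -> free_mod) : Prop :=
  is_endo e /\ forall x, e (e x) = e x.

Definition endo_unit (u : free_mod -> free_mod) : Prop :=
  is_endo u /\ exists v, is_endo v /\ (forall x, u (v x) = x) /\ (forall x, v (u x) = x).

Definition endo_n_clean (n : nat) (f : free_mod -> free_mod) : Prop :=
  exists (e : free_mod -> free_mod) (u : 'I_n -> free_mod -> free_mod),
    endo_idempotent e /\ (forall k, endo_unit (u k)) /\
    forall x, f x = foldr (fun k acc => addF (u k x) acc) (e x) (enum 'I_n).

Definition End_free_n_clean (n : nat) : Prop :=
  forall f, is_endo f -> endo_n_clean n f.

End FreeModule.

(* Call a frame in a ring S a triple of orthogonal idempotents
   p, j, k with p + j + k = 1, together with s in pSj and t in jSp such that
   st = p and ts = j, and g in jSk and h in kSj such that hg = k.  Since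
   |I| >= 2, a maximal matching of I (Zorn) is nonempty and leaves at most one
   index unmatched; so I = P + J + K with P, J the two matched sides and
   |K| <= 1, and coordinate projections and 0/1 matrices give a frame in
   End(R^(I)).

   In a ring with a frame, let q = j + k.  For b in kSk the unit
   (1 + bh)(1 + g) fixes p and has kk-corner k + b; for a in pSp and y in qSq
   with kyk = k, (1 + as)(s + t + y) is a unit since
   s + t + y = (1 + yt)(1 + jyk)(s + t + k) and (s + t + k)^2 = 1.  Reading
   a, b, y and the qp-part off f, the two units u1, u2 add up to f - p on the
   column p and to f on the row q; hence e = f - u2 - u1 satisfies ep = p and
   qe = 0, so it is idempotent. *)

From HB Require Import structures.
From mathcomp Require Import all_boot all_order all_algebra.
From mathcomp Require Import boolp classical_sets.
Set Implicit Arguments. Unset Strict Implicit. Unset Printing Implicit Defensive.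
Import GRing.Theory.
Local Open Scope ring_scope.

Section Invertible.
Variable T : pzRingType.

Definition invertible (u : T) := exists v, u * v = 1 /\ v * u = 1.

Lemma invertibleM a b : invertible a -> invertible b -> invertible (a * b).
Proof.
move=> [a' [aa' a'a]] [b' [bb' b'b]]; exists (b' * a'); split.
- by rewrite mulrA -(mulrA a) bb' mulr1 aa'.
- by rewrite mulrA -(mulrA b') a'a mulr1 b'b.
Qed.

Lemma invertible_unipotent n : n * n = 0 -> invertible (1 + n).
Proof.
move=> nn; exists (1 - n); split.
- by rewrite mulrDl mul1r mulrBr mulr1 nn subr0 subrK.
- by rewrite mulrBl mul1r mulrDr mulr1 nn addr0 addrK.
Qed.

Lemma invertible_involution u : u * u = 1 -> invertible u.
Proof. by exists u. Qed.

End Invertible.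

Section Frame.
Variables (T : pzRingType) (p j k s t g h : T).
Hypotheses (pp : p * p = p) (jj : j * j = j) (kk : k * k = k)
  (pj : p * j = 0) (jp : j * p = 0) (pk : p * k = 0) (kp : k * p = 0)
  (jk : j * k = 0) (kj : k * j = 0) (pjk : p + j + k = 1)
  (ps : p * s = s) (sj : s * j = s) (jt : j * t = t) (tp : t * p = t)
  (st : s * t = p) (ts : t * s = j)
  (jg : j * g = g) (gk : g * k = g) (hj : h * j = h) (hg : h * g = k).

Local Notation q := (j + k).

Let pq : p * q = 0. Proof. by rewrite mulrDr pj pk addr0. Qed.
Let qp : q * p = 0. Proof. by rewrite mulrDl jp kp addr0. Qed.
Let qq : q * q = q. Proof. by rewrite mulrDl !mulrDr jj jk kj kk addr0 add0r. Qed.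
Let pDq : p + q = 1. Proof. by rewrite addrA. Qed.
Let qk : q * k = k. Proof. by rewrite mulrDl jk kk add0r. Qed.
Let kq : k * q = k. Proof. by rewrite mulrDr kj kk add0r. Qed.
Let sp : s * p = 0. Proof. by rewrite -sj -mulrA jp mulr0. Qed.
Let sk : s * k = 0. Proof. by rewrite -sj -mulrA jk mulr0. Qed.
Let ks : k * s = 0. Proof. by rewrite -ps mulrA kp mul0r. Qed.
Let qs : q * s = 0. Proof. by rewrite -ps mulrA qp mul0r. Qed.
Let tj : t * j = 0. Proof. by rewrite -tp -mulrA pj mulr0. Qed.
Let tk : t * k = 0. Proof. by rewrite -tp -mulrA pk mulr0. Qed.
Let kt : k * t = 0. Proof. by rewrite -jt mulrA kj mul0r. Qed.
Let qt : q * t = t. Proof. by rewrite mulrDl jt kt addr0. Qed.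
Let s2 : s * s = 0. Proof. by rewrite -{2}ps mulrA sp mul0r. Qed.
Let t2 : t * t = 0. Proof. by rewrite -{2}jt mulrA tj mul0r. Qed.
Let gj : g * j = 0. Proof. by rewrite -gk -mulrA kj mulr0. Qed.
Let g2 : g * g = 0. Proof. by rewrite -{2}jg mulrA gj mul0r. Qed.
Let pg : p * g = 0. Proof. by rewrite -jg mulrA pj mul0r. Qed.
Let kg : k * g = 0. Proof. by rewrite -jg mulrA kj mul0r. Qed.
Let gp : g * p = 0. Proof. by rewrite -gk -mulrA kp mulr0. Qed.
Let hp : h * p = 0. Proof. by rewrite -hj -mulrA jp mulr0. Qed.
Let hk : h * k = 0. Proof. by rewrite -hj -mulrA jk mulr0. Qed.

Lemma swap_involutive : (s + t + k) * (s + t + k) = 1.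
Proof.
by rewrite !mulrDl !mulrDr s2 st sk ts t2 tk ks kt kk !add0r !addr0.
Qed.

Lemma invertible_swapD y : p * y = 0 -> y * p = 0 -> k * y * k = k ->
  invertible (s + t + y).
Proof.
move=> py yp kyk.
have yE : y = y * j + (j * y * k + k).
  have yq : y = y * q by rewrite -[LHS]mulr1 -pDq mulrDr yp add0r.
  have ykE : y * k = j * y * k + k.
    by rewrite -[y * k]mul1r -pDq !mulrDl !mulrA py mul0r add0r kyk.
  by rewrite {1}yq mulrDr ykE.
have factor_jyk : (1 + j * y * k) * (s + t + k) = s + t + k + j * y * k.
  by rewrite mulrDl mul1r -!mulrA !(mulrDr k) ks kt kk !add0r.
have factor_yt :
    (1 + y * t) * (s + t + k + j * y * k) = s + t + k + j * y * k + y * j.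
  by rewrite mulrDl mul1r -!mulrA !(mulrDr t) ts t2 tk (mulrA t j) tj mul0r !addr0.
have -> : s + t + y = (1 + y * t) * ((1 + j * y * k) * (s + t + k)).
  by rewrite factor_jyk factor_yt {1}yE [y * j + _]addrC [j * y * k + k]addrC !addrA.
have ty : t * y = 0 by rewrite -tp -mulrA py mulr0.
apply: invertibleM.
  by apply: invertible_unipotent; rewrite -mulrA (mulrA t) ty mul0r mulr0.
apply: invertibleM; last exact: invertible_involution swap_involutive.
by apply: invertible_unipotent; rewrite !mulrA -(mulrA (j * y) k j) kj mulr0 !mul0r.
Qed.

Lemma exists_unit_swap a y : p * a = a -> a * p = a ->
  p * y = 0 -> y * p = 0 -> k * y * k = k ->
  exists u, [/\ invertible u, u * p = t + a & q * u = t + y].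
Proof.
move=> pa ap py yp kyk; exists ((1 + a * s) * (s + t + y)); split.
- apply: invertibleM; last exact: invertible_swapD.
  have sa : s * a = 0 by rewrite -pa mulrA sp mul0r.
  by apply: invertible_unipotent; rewrite -mulrA (mulrA s) sa mul0r mulr0.
- by rewrite -mulrA !mulrDl sp tp yp add0r addr0 mul1r -mulrA st ap.
have qa : q * a = 0 by rewrite -pa mulrA qp mul0r.
have qy : q * y = y by rewrite -[RHS]mul1r -pDq [RHS]mulrDl py add0r.
by rewrite mulrA [q * (1 + _)]mulrDr mulr1 mulrA qa mul0r addr0 !(mulrDr q) qs qt qy add0r.
Qed.

Lemma exists_unit_corner b : k * b = b -> b * k = b ->
  exists v, [/\ invertible v, v * p = p, p * v = p & k * v * k = k + b].
Proof.
move=> kb bk; exists ((1 + b * h) * (1 + g)); split.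
- apply: invertibleM; last exact: invertible_unipotent g2.
  have hb : h * b = 0 by rewrite -kb mulrA hk mul0r.
  by apply: invertible_unipotent; rewrite -mulrA (mulrA h) hb mul0r mulr0.
- by rewrite -mulrA [(1 + g) * p]mulrDl mul1r gp addr0 mulrDl mul1r -mulrA hp mulr0 addr0.
- have pb : p * b = 0 by rewrite -kb mulrA pk mul0r.
  by rewrite mulrA [p * (1 + _)]mulrDr mulr1 mulrA pb mul0r addr0 mulrDr mulr1 pg addr0.
rewrite mulrA [k * (1 + _)]mulrDr mulr1 mulrA kb -mulrA [(1 + g) * k]mulrDl.
by rewrite mul1r gk mulrDr !mulrDl kk kg -!mulrA hk hg bk mulr0 addr0 add0r.
Qed.

Lemma frame_two_clean f : exists e u1 u2 : T,
  e * e = e /\ invertible u1 /\ invertible u2 /\ f = e + u1 + u2.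
Proof.
move bE : (k * f * k - k - k) => b.
have kb : k * b = b by rewrite -bE !mulrBr !mulrA kk.
have bk : b * k = b by rewrite -bE !mulrBl -mulrA kk.
have [v [v_inv vp pv kvk]] := exists_unit_corner kb bk.
move yE : (q * f * q - q * v * q) => y.
have yp : y * p = 0 by rewrite -yE mulrBl -!mulrA qp !mulr0 subr0.
have py : p * y = 0 by rewrite -yE mulrBr !mulrA pq !mul0r subr0.
have kyk : k * y * k = k.
  by rewrite -yE mulrBr mulrBl !mulrA kq -!mulrA qk !mulrA kvk -bE [k + _]addrC subrK subKr.
move aE : (p * f * p - p - p) => a.
have pa : p * a = a by rewrite -aE !mulrBr !mulrA pp.
have ap : a * p = a by rewrite -aE !mulrBl -mulrA pp.
have [u1 [u1_inv u1p qu1]] := exists_unit_swap pa ap py yp kyk.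
move cE : (q * f * p - t) => c.
have cp : c * p = c by rewrite -cE mulrBl -mulrA pp tp.
have qc : q * c = c by rewrite -cE mulrBr !mulrA qq qt.
have pc : p * c = 0 by rewrite -qc mulrA pq mul0r.
have u2_inv : invertible ((1 + c) * v).
  by apply: invertibleM v_inv; apply: invertible_unipotent; rewrite -{1}cp -mulrA pc mulr0.
move u2E : ((1 + c) * v) => u2 in u2_inv.
have u2p : u2 * p = p + c by rewrite -u2E -mulrA vp mulrDl mul1r cp.
have qu2 : q * u2 = q * v * q + c.
  have qv : q * v = q * v * q by rewrite -{1}[q * v]mulr1 -pDq mulrDr -mulrA vp qp add0r.
  have cv : c * v = c by rewrite -cp -mulrA pv.
  by rewrite -u2E mulrA [q * (1 + _)]mulrDr mulr1 qc [(q + c) * v]mulrDl cv -qv.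
have fp : f * p = a + p + p + (c + t) by rewrite -aE -cE !subrK -!mulrDl pDq mul1r.
have qf : q * f = c + t + (y + q * v * q) by rewrite -cE -yE !subrK -!mulrDr pDq mulr1.
exists (f - u2 - u1), u1, u2; split; last by rewrite !subrK.
have ep : (f - u2 - u1) * p = p.
  rewrite !mulrBl fp u1p u2p.
  by rewrite [a + p + p + _](@GRing.add T).[AC (3*2) ((2*(5*1))*(3*4))] !addrK.
have qe : q * (f - u2 - u1) = 0.
  rewrite !mulrBr qf qu1 qu2.
  by rewrite [c + t + _](@GRing.add T).[AC (2*2) ((2*3)*(4*1))] addrK subrr.
have pe : p * (f - u2 - u1) = f - u2 - u1 by rewrite -[RHS]mul1r -pDq mulrDl qe addr0.
by rewrite -{2}pe mulrA ep pe.
Qed.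
End Frame.

Inductive role := InP | InJ | InK.

Definition role_eqb (r r' : role) :=
  match r, r' with InP, InP | InJ, InJ | InK, InK => true | _, _ => false end.

Lemma role_eqP : Equality.axiom role_eqb.
Proof. by case; case; constructor. Qed.

HB.instance Definition _ := hasDecEq.Build role role_eqP.

Section Matching.
Variable I : Type.
Implicit Types A B : set (I * I).
Local Open Scope classical_set_scope.

Definition matching A :=
  [/\ forall i l l', A (i, l) -> A (i, l') -> l = l',
      forall i i' l, A (i, l) -> A (i', l) -> i = i' &
      forall i l l', A (i, l) -> A (l', i) -> False].

Definition maximal_matching A := matching A /\ forall B, A `<` B -> ~ matching B.

Lemma exists_maximal_matching : exists A, maximal_matching A.
Proof.
apply: Zorn_bigcup => F F_match F_chain.
have common z w : (\bigcup_(X in F) X) z -> (\bigcup_(X in F) X) w ->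
    exists2 Z, matching Z & Z z /\ Z w.
  move=> [X FX Xz] [Y FY Yw]; case: (F_chain X Y FX FY) => [XY|YX].
    by exists Y; [exact: F_match | split=> //; apply: XY].
  by exists X; [exact: F_match | split=> //; apply: YX].
split=> [i l l'|i i' l|i l l'] /common /[apply] -[Z [Zf Zi Zd] [Za Zb]];
  [exact: Zf Za Zb | exact: Zi Za Zb | exact: Zd Za Zb].
Qed.

Definition unmatched A u := ~ (exists l, A (u, l)) /\ ~ (exists l, A (l, u)).

Lemma maximal_matching_unmatched A u v :
  maximal_matching A -> unmatched A u -> unmatched A v -> u = v.
Proof.
move=> [[Af Ai Ad] Amax] [uS uT] [vS vT]; apply: contrapT => uv.
apply: (Amax (fun z => A z \/ z.1 = u /\ z.2 = v)).
  split=> [z Az|]; first by left.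
  by move=> /(_ (u, v) (or_intror (conj erefl erefl))) Auv; apply: uS; exists v.
split.
- move=> i l l' [Ail|[/= -> ->]] [Ail'|[/= iu ->]] //; first exact: Af Ail Ail'.
  + by case: uS; exists l; rewrite -iu.
  + by case: uS; exists l'.
- move=> i i' l [Ail|[/= -> lv]] [Ai'l|[/= -> lv']] //; first exact: Ai Ail Ai'l.
  + by case: vT; exists i; rewrite -lv'.
  + by case: vT; exists i'; rewrite -lv.
- move=> i l l' [Ail|[/= iu lv]] [Al'i|[/= l'u iv]]; first exact: Ad Ail Al'i.
  + by case: vS; exists l; rewrite -iv.
  + by case: uT; exists l'; rewrite -iu.
  + by apply: uv; rewrite -iu iv.
Qed.

End Matching.

Lemma role_partition (I : Type) : (exists i j : I, i <> j) ->
  exists (rl : I -> role) (pt : I -> I) (kel : option I) (j0 : I),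
  [/\ forall i, rl i = InP -> rl (pt i) = InJ /\ pt (pt i) = i,
      forall i, rl i = InJ -> rl (pt i) = InP /\ pt (pt i) = i,
      forall i, rl i = InK <-> kel = Some i & rl j0 = InJ].
Proof.
move=> [i1 [i2 i12]].
have [A Amax] := exists_maximal_matching I; have [[Af Ai Ad] _] := Amax.
pose src i := exists l, A (i, l); pose tgt i := exists l, A (l, i).
pose rl i := if `[< src i >] then InP else if `[< tgt i >] then InJ else InK.
have rlP i : rl i = InP <-> src i.
  by rewrite /rl; case: (asboolP (src i)) => si; case: (asboolP (tgt i)).
have rlJ i : rl i = InJ <-> ~ src i /\ tgt i.
  by rewrite /rl; case: (asboolP (src i)) => si; case: (asboolP (tgt i)) => ti; split=> // -[].
have rlK i : rl i = InK <-> unmatched A i.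
  by rewrite /rl; case: (asboolP (src i)) => si; case: (asboolP (tgt i)) => ti; split=> // -[].
pose pt i := if pselect (exists l, A (i, l) \/ A (l, i)) is left e then sval (cid e) else i.
have ptS i : src i -> A (i, pt i).
  move=> [l Ail]; rewrite /pt; case: pselect => [e|]; last by case; exists l; left.
  by case: cid => l' /= [//|Al'i]; case: (Ad _ _ _ Ail Al'i).
have ptT i : tgt i -> A (pt i, i).
  move=> [l Ali]; rewrite /pt; case: pselect => [e|]; last by case; exists l; right.
  by case: cid => l' /= [Ail'|//]; case: (Ad _ _ _ Ail' Ali).
pose kel := if pselect (exists i, rl i = InK) is left e then Some (sval (cid e)) else None.
have [[a b] Aab] : exists z, A z.
  apply: contrapT => nA; apply: i12; apply: (maximal_matching_unmatched Amax);
    by split=> -[l Al]; apply: nA; eexists; exact: Al.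
exists rl, pt, kel, b; split.
- move=> i /rlP /ptS Aipt; split; last exact: Ai (ptT _ (ex_intro _ i Aipt)) Aipt.
  by apply/rlJ; split; [case=> m /Ad /(_ Aipt) | exists i].
- move=> i /rlJ [nsi /ptT Apti]; split; last exact: Af (ptS _ (ex_intro _ i Apti)) Apti.
  by apply/rlP; exists i.
- move=> i; rewrite /kel; case: pselect => [e|ne]; last by split=> // rli; case: ne; exists i.
  case: cid => k /= /rlK k_unm; split=> [/rlK i_unm|[<-]]; last exact/rlK.
  by congr Some; exact: maximal_matching_unmatched Amax k_unm i_unm.
- by apply/rlJ; split; [case=> m /Ad /(_ Aab) | exists a].
Qed.

Section EndRing.
Variables (R : pzRingType) (I : Type).
Local Notation F := (free_mod R I).

Lemma free_mod_ext (x y : F) : (forall i, sval x i = sval y i) -> x = y.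
Proof. by case: x y => x x_fin [y y_fin] /= /funext xy; apply: eq_exist. Qed.

Record endo := Endo { endo_fun :> F -> F; endo_is_endo : is_endo endo_fun }.

Lemma endo_ext (f g : endo) : (forall x, f x = g x) -> f = g.
Proof.
case: f g => f f_endo [g g_endo] /= /funext fg; subst g.
by congr Endo; apply: Prop_irrelevance.
Qed.

HB.instance Definition _ := gen_eqMixin endo.
HB.instance Definition _ := gen_choiceMixin endo.

Definition zeroF : F := exist _ (fun _ => 0) (fsupp0 R I).

Lemma const0_is_endo : is_endo (fun _ => zeroF).
Proof. by split=> *; apply: free_mod_ext => i /=; rewrite ?addr0 ?mul0r. Qed.

Lemma add_is_endo (f g : endo) : is_endo (fun x => addF (f x) (g x)).
Proof.
case: f g => f [fD fZ] [g [gD gZ]].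
split=> *; apply: free_mod_ext => i /=.
  by rewrite fD gD /= addrACA.
by rewrite fZ gZ /= mulrDl.
Qed.

Lemma opp_is_endo (f : endo) : is_endo (fun x => scaleF (f x) (-1)).
Proof.
case: f => f [fD fZ].
split=> *; apply: free_mod_ext => i /=.
  by rewrite fD /= mulrDl.
by rewrite fZ /= !mulrN1 mulNr.
Qed.

Lemma comp_is_endo (f g : endo) : is_endo (f \o g).
Proof. by case: f g => f [fD fZ] [g [gD gZ]]; split=> * /=; rewrite ?gD ?fD ?gZ ?fZ. Qed.

Lemma id_is_endo : is_endo (@id F).
Proof. by []. Qed.

Definition endo0 := Endo const0_is_endo.
Definition endoD f g := Endo (add_is_endo f g).
Definition endoN f := Endo (opp_is_endo f).
Definition endoM f g := Endo (comp_is_endo f g).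
Definition endo1 := Endo id_is_endo.

Lemma endoDA : associative endoD.
Proof. by move=> f g h; apply: endo_ext => x; apply: free_mod_ext => i /=; rewrite addrA. Qed.

Lemma endoDC : commutative endoD.
Proof. by move=> f g; apply: endo_ext => x; apply: free_mod_ext => i /=; rewrite addrC. Qed.

Lemma endo0D : left_id endo0 endoD.
Proof. by move=> f; apply: endo_ext => x; apply: free_mod_ext => i /=; rewrite add0r. Qed.

Lemma endoND : left_inverse endo0 endoN endoD.
Proof. by move=> f; apply: endo_ext => x; apply: free_mod_ext => i /=; rewrite mulrN1 addNr. Qed.

HB.instance Definition _ := GRing.isZmodule.Build endo endoDA endoDC endo0D endoND.

Lemma endoMA : associative endoM. Proof. by move=> f g h; apply: endo_ext. Qed.
Lemma endo1M : left_id endo1 endoM. Proof. by move=> f; apply: endo_ext. Qed.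
Lemma endoM1 : right_id endo1 endoM. Proof. by move=> f; apply: endo_ext. Qed.
Lemma endoMDl : left_distributive endoM endoD. Proof. by move=> f g h; apply: endo_ext. Qed.

Lemma endoMDr : right_distributive endoM endoD.
Proof. by move=> [f [fD fZ]] g h; apply: endo_ext => x /=; rewrite fD. Qed.

HB.instance Definition _ :=
  GRing.Zmodule_isPzRing.Build endo endoMA endo1M endoM1 endoMDl endoMDr.

Lemma endo_unit_invertible (u : endo) : invertible u -> endo_unit u.
Proof.
case=> v [uv vu]; split; first exact: endo_is_endo.
exists v; split; first exact: endo_is_endo.
by split=> x; [move: uv | move: vu] => /(congr1 (fun w : endo => w x)).
Qed.

Lemma endo_two_clean (f e u1 u2 : endo) : e * e = e -> invertible u1 ->
  invertible u2 -> f = e + u1 + u2 -> endo_n_clean 2 f.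
Proof.
move=> ee u1_inv u2_inv ->.
exists e, (fun k : 'I_2 => if k == ord0 then u1 else u2); split; [|split].
- split; first exact: endo_is_endo.
  by move=> x; move: ee => /(congr1 (fun w : endo => w x)).
- by move=> k; case: ifP => _; apply: endo_unit_invertible.
move=> x; rewrite enum_ordSl enum_ordSl enum_ord0 /=.
by apply: free_mod_ext => i /=; rewrite [LHS](@GRing.add R).[ACl 2*(3*1)].
Qed.

End EndRing.

Definition partial_injective (I : Type) (m : I -> option I) :=
  forall i i' l, m i = Some l -> m i' = Some l -> i = i'.

Section Comap.
Variables (R : pzRingType) (I : Type) (m : I -> option I).
Hypothesis m_inj : partial_injective m.

Definition comap_fun (x : I -> R) i := if m i is Some l then x l else 0.

Lemma fsupp_comap x : fsupp x -> fsupp (comap_fun x).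
Proof.
case=> n [g g_supp].
pose pre k := if pselect (exists i, m i = Some (g k)) is left e then sval (cid e) else g k.
exists n, pre => i; rewrite /comap_fun; case mi: (m i) => [l|] // xl.
have [k gk] := g_supp _ xl; exists k; rewrite /pre.
case: pselect => [e|]; last by case; exists i; rewrite mi gk.
by case: cid => i' /= mi'; apply: m_inj mi' _; rewrite mi gk.
Qed.

Definition comapF (x : free_mod R I) : free_mod R I :=
  exist _ (comap_fun (sval x)) (fsupp_comap (proj2_sig x)).

Lemma comap_is_endo : is_endo comapF.
Proof.
split=> *; apply: free_mod_ext => i /=; rewrite /comap_fun.
  by case: (m i); rewrite ?addr0.
by case: (m i); rewrite ?mul0r.
Qed.

Definition comap : endo R I := Endo comap_is_endo.

End Comap.

Section ComapTheory.
Variables (R : pzRingType) (I : Type) (m1 m2 m3 : I -> option I).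
Hypotheses (m1_inj : partial_injective m1) (m2_inj : partial_injective m2)
  (m3_inj : partial_injective m3).

Lemma comapM : (forall i, obind m2 (m1 i) = m3 i) ->
  comap R m1_inj * comap R m2_inj = comap R m3_inj.
Proof.
move=> m12; apply: endo_ext => x; apply: free_mod_ext => i /=.
by rewrite /comap_fun -m12; case: (m1 i).
Qed.

Lemma comapM0 : (forall i, obind m2 (m1 i) = None) -> comap R m1_inj * comap R m2_inj = 0.
Proof.
move=> m12; apply: endo_ext => x; apply: free_mod_ext => i /=.
by rewrite /comap_fun; move: (m12 i); case: (m1 i) => //= l ->.
Qed.

End ComapTheory.

Section CoordinateFrame.
Variables (R : pzRingType) (I : Type) (rl : I -> role) (pt : I -> I).
Variables (kel : option I) (j0 : I).
Hypotheses (ptP : forall i, rl i = InP -> rl (pt i) = InJ /\ pt (pt i) = i)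
  (ptJ : forall i, rl i = InJ -> rl (pt i) = InP /\ pt (pt i) = i)
  (kelP : forall i, rl i = InK <-> kel = Some i) (j0J : rl j0 = InJ).

Definition on_role r i := if rl i == r then Some i else None.
Definition P_to_J i := if rl i == InP then Some (pt i) else None.
Definition J_to_P i := if rl i == InJ then Some (pt i) else None.
Definition j0_to_K i := if `[< i = j0 >] then kel else None.
Definition K_to_j0 i := if rl i == InK then Some j0 else None.

Lemma on_role_inj r : partial_injective (on_role r).
Proof. by move=> i i' l; rewrite /on_role; do 2!case: eqP => // _; move=> [->] [->]. Qed.

Lemma P_to_J_inj : partial_injective P_to_J.
Proof.
move=> i i' l; rewrite /P_to_J; case: eqP => // /ptP [_ pt_i] [<-].
by case: eqP => // /ptP [_ pt_i'] [pt_ii']; rewrite -pt_i -pt_i' pt_ii'.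
Qed.

Lemma J_to_P_inj : partial_injective J_to_P.
Proof.
move=> i i' l; rewrite /J_to_P; case: eqP => // /ptJ [_ pt_i] [<-].
by case: eqP => // /ptJ [_ pt_i'] [pt_ii']; rewrite -pt_i -pt_i' pt_ii'.
Qed.

Lemma j0_to_K_inj : partial_injective j0_to_K.
Proof. by move=> i i' l; rewrite /j0_to_K; case: asboolP => // ->; case: asboolP. Qed.

Lemma K_to_j0_inj : partial_injective K_to_j0.
Proof.
move=> i i' l; rewrite /K_to_j0; case: eqP => // /kelP kel_i _.
by case: eqP => // /kelP kel_i' _; move: kel_i'; rewrite kel_i => -[].
Qed.

Local Notation idem r := (comap R (@on_role_inj r)).
Local Notation s := (comap R P_to_J_inj).
Local Notation t := (comap R J_to_P_inj).
Local Notation g := (comap R j0_to_K_inj).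
Local Notation h := (comap R K_to_j0_inj).

Lemma idemM r r' : idem r * idem r' = if r == r' then idem r else 0.
Proof.
case: eqP => [<-|neq]; [apply: comapM | apply: comapM0] => i; rewrite /on_role.
  by case: eqP => //= ->; rewrite eqxx.
by case: eqP => //= ->; case: eqP.
Qed.

Lemma idemD : idem InP + idem InJ + idem InK = 1.
Proof.
apply: endo_ext => x; apply: free_mod_ext => i /=.
by rewrite /comap_fun /on_role; case: (rl i); rewrite /= ?addr0 ?add0r.
Qed.

Lemma idemP_s : idem InP * s = s.
Proof. by apply: comapM => i; rewrite /on_role /P_to_J; case: eqP => //= ->. Qed.

Lemma s_idemJ : s * idem InJ = s.
Proof.
apply: comapM => i; rewrite /on_role /P_to_J.
by case: eqP => //= /ptP [-> _].
Qed.

Lemma idemJ_t : idem InJ * t = t.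
Proof. by apply: comapM => i; rewrite /on_role /J_to_P; case: eqP => //= ->. Qed.

Lemma t_idemP : t * idem InP = t.
Proof.
apply: comapM => i; rewrite /on_role /J_to_P.
by case: eqP => //= /ptJ [-> _].
Qed.

Lemma s_t : s * t = idem InP.
Proof.
apply: comapM => i; rewrite /on_role /P_to_J /J_to_P.
by case: eqP => //= /ptP [-> ->].
Qed.

Lemma t_s : t * s = idem InJ.
Proof.
apply: comapM => i; rewrite /on_role /P_to_J /J_to_P.
by case: eqP => //= /ptJ [-> ->].
Qed.

Lemma idemJ_g : idem InJ * g = g.
Proof.
apply: comapM => i; rewrite /on_role /j0_to_K.
case: asboolP => [->|ij0]; first by rewrite j0J /= asboolT.
by case: eqP => //= _; case: asboolP.
Qed.

Lemma g_idemK : g * idem InK = g.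
Proof.
apply: comapM => i; rewrite /on_role /j0_to_K.
case: asboolP => // _; case kel_l: kel => [l|] //=.
by rewrite (proj2 (kelP l) kel_l).
Qed.

Lemma h_idemJ : h * idem InJ = h.
Proof. by apply: comapM => i; rewrite /on_role /K_to_j0; case: eqP => //=; rewrite j0J. Qed.

Lemma h_g : h * g = idem InK.
Proof.
apply: comapM => i; rewrite /on_role /K_to_j0 /j0_to_K.
by case: eqP => //= /kelP ->; rewrite asboolT.
Qed.

Lemma endo_frame_two_clean (f : endo R I) : exists e u1 u2 : endo R I,
  e * e = e /\ invertible u1 /\ invertible u2 /\ f = e + u1 + u2.
Proof.
exact: (frame_two_clean (idemM InP InP) (idemM InJ InJ) (idemM InK InK)
  (idemM InP InJ) (idemM InJ InP) (idemM InP InK) (idemM InK InP)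
  (idemM InJ InK) (idemM InK InJ) idemD idemP_s s_idemJ idemJ_t t_idemP s_t t_s
  idemJ_g g_idemK h_idemJ h_g).
Qed.

End CoordinateFrame.

Theorem theorem7 (R : pzRingType) (I : Type)
  (two_le_card : exists i j : I, i <> j) :
  End_free_n_clean R I 2.
Proof.
move=> f f_endo.
have [rl [pt [kel [j0 [ptP ptJ kelP j0J]]]]] := role_partition two_le_card.
have [e [u1 [u2 [ee [u1_inv [u2_inv fE]]]]]] :=
  endo_frame_two_clean ptP ptJ kelP j0J (Endo f_endo).
exact: endo_two_clean ee u1_inv u2_inv fE.
Qed.
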